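(* Let $|\text{-}|:\mathcal E\to\mathcal B$ be a concrete category which is fibred over $\mathcal B$. If the $\mathcal Q_{\mathcal B}$-category $\overline{\mathcal E}$ is order-complete, then $\overline{\mathcal E}$ is conically cocomplete.
   Context: $\mathcal B$ has small hom-sets; $|\text{-}|$ is faithful; a map $f:|X|\to|Y|$ is an $\mathcal E$-morphism if it equals $|f'|$ for some $f':X\to Y$; $\overline{\mathcal E}(X,Y)$ is the set of these. $\mathcal E$ is fibred if for every $Z\in\mathrm{ob}\,\mathcal E$ and map $g:T\to|Z|$ there is an object $\widetilde Y$ with $|\widetilde Y|=T$ (initial lifting) such that a map $h:|W|\to T$ is an $\mathcal E$-morphism $W\to\widetilde Y$ iff $g\circ h$ is an $\mathcal E$-morphism $W\to Z$. The fibre $\mathcal E_T$ is the class of $Y$ with $|Y|=T$ preordered by $Y\le Y'$ iff $1_T\in\overline{\mathcal E}(Y,Y')$; $\overline{\mathcal E}$ is order-complete if each fibre admits joins of all (possibly large) subfamilies. For $\mathbf f\subseteq\mathcal B(S,T)$, $\mathbf h\subseteq\mathcal B(S,U)$ put $\mathbf h\swarrow\mathbf f=\{g\mid\forall f\in\mathbf f:g\circ f\in\mathbf h\}$. A presheaf of extent $T$ is a family $\varphi_X\subseteq\mathcal B(|X|,T)$ with $\varphi_X\circ\overline{\mathcal E}(X',X)\subseteq\varphi_{X'}$; a supremum is $Y$ with $|Y|=T$ and $\overline{\mathcal E}(Y,Z)=\bigcap_X\overline{\mathcal E}(X,Z)\swarrow\varphi_X$ for all $Z$. $\overline{\mathcal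 E}$ is conically cocomplete if for every $T$ and every family $(Y_i)_{i\in I}$ in $\mathcal E_T$ the presheaf $X\mapsto\bigcup_i\overline{\mathcal E}(X,Y_i)$ has a supremum. *)

From Stdlib Require Import Logic.EqdepFacts.

Set Implicit Arguments.

Record Cat := {
  Ob : Type;
  Hom : Ob -> Ob -> Type;
  idm : forall a, Hom a a;
  comp : forall a b c, Hom b c -> Hom a b -> Hom a c;
  comp_id_l : forall a b (f : Hom a b), comp (idm b) f = f;
  comp_id_r : forall a b (f : Hom a b), comp f (idm a) = f;
  comp_assoc : forall a b c d (h : Hom c d) (g : Hom b c) (f : Hom a b),
      comp h (comp g f) = comp (comp h g) f
}.

Arguments idm {c0} a : rename.
Arguments comp {c0 a b c} _ _ : rename.

Record Concrete (E B : Cat) := {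
  fob : Ob E -> Ob B;
  fhom : forall X Y, Hom E X Y -> Hom B (fob X) (fob Y);
  fhom_id : forall X, fhom X X (idm X) = idm (fob X);
  fhom_comp : forall X Y Z (g : Hom E Y Z) (f : Hom E X Y),
      fhom X Z (comp g f) = comp (fhom Y Z g) (fhom X Y f);
  faithful : forall X Y (f g : Hom E X Y), fhom X Y f = fhom X Y g -> f = g
}.

Arguments fob {E B} c _.
Arguments fhom {E B} c {X Y} _.

Section Defs.
Context {E B : Cat} (U : Concrete E B).

Definition Ebar (X Y : Ob E) (f : Hom B (fob U X) (fob U Y)) : Prop :=
  exists f' : Hom E X Y, fhom U f' = f.

Definition Fibre (T : Ob B) := { Y : Ob E & fob U Y = T }.

(** Ebar(X, Y) for Y in the fibre over T, viewed on maps |X| -> T. *)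
Definition EbarL (X : Ob E) {T : Ob B} (Y : Fibre T) (f : Hom B (fob U X) T) : Prop :=
  Ebar X (projT1 Y) (eq_rect_r (fun t => Hom B (fob U X) t) f (projT2 Y)).

(** Ebar(Y, Z) for Y in the fibre over T, viewed on maps T -> |Z|. *)
Definition EbarR {T : Ob B} (Y : Fibre T) (Z : Ob E) (g : Hom B T (fob U Z)) : Prop :=
  Ebar (projT1 Y) Z (eq_rect_r (fun t => Hom B t (fob U Z)) g (projT2 Y)).

(** Fibre preorder: Y <= Y' iff 1_T is in Ebar(Y, Y'). *)
Definition fibre_le {T : Ob B} (Y Y' : Fibre T) : Prop :=
  Ebar (projT1 Y) (projT1 Y')
    (eq_rect_r (fun t => Hom B t (fob U (projT1 Y')))
       (eq_rect_r (fun t => Hom B T t) (idm T) (projT2 Y')) (projT2 Y)).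

(** E is fibred: initial liftings of maps g : T -> |Z|. *)
Definition fibred : Prop :=
  forall (Z : Ob E) (T : Ob B) (g : Hom B T (fob U Z)),
    exists Yt : Fibre T,
      forall (W : Ob E) (h : Hom B (fob U W) T),
        EbarL W Yt h <-> Ebar W Z (comp g h).

Definition is_join {T : Ob B} (P : Fibre T -> Prop) (J : Fibre T) : Prop :=
  forall Y' : Fibre T, fibre_le J Y' <-> (forall Y, P Y -> fibre_le Y Y').

Definition order_complete : Prop :=
  forall (T : Ob B) (P : Fibre T -> Prop), exists J : Fibre T, is_join P J.

Definition is_presheaf (T : Ob B) (phi : forall X : Ob E, Hom B (fob U X) T -> Prop) : Prop :=
  forall (X X' : Ob E) (f : Hom B (fob U X) T) (g : Hom B (fob U X') (fob U X)),
    phi X f -> Ebar X' X g -> phi X' (comp f g).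

(** Y is a supremum of phi:
    Ebar(Y,Z) = \bigcap_X (Ebar(X,Z) ↙ phi_X) for all Z. *)
Definition is_supremum (T : Ob B) (phi : forall X : Ob E, Hom B (fob U X) T -> Prop)
  (Y : Fibre T) : Prop :=
  forall (Z : Ob E) (g : Hom B T (fob U Z)),
    EbarR Y Z g <->
    (forall (X : Ob E) (f : Hom B (fob U X) T), phi X f -> Ebar X Z (comp g f)).

Definition conically_cocomplete : Prop :=
  forall (T : Ob B) (I : Type) (Yf : I -> Fibre T),
    exists Y : Fibre T,
      is_supremum (fun X f => exists i, EbarL X (Yf i) f) Y.

End Defs.

(* An initial lifting [Yt] of [g : T -> |Z|] represents the predicate [EbarR _ Z g]
   on the fibre over [T]: [Y <= Yt] iff [g] underlies an E-morphism [Y -> Z].  Hence a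
   join [J] of the [Y_i] in the fibre satisfies [EbarR J Z g] iff [EbarR (Y_i) Z g]
   for all [i], and by a Yoneda argument the latter says exactly that [g] lies in
   the right extension of the [Ebar(-, Z)] along the conical presheaf. *)

From Stdlib Require Import Setoid.

Section FibreCalculus.
Context {E B : Cat} (U : Concrete E B).

Definition fibre_id {T : Ob B} (Y : Fibre U T) : Hom B (fob U (projT1 Y)) T :=
  eq_rect_r (fun t => Hom B t T) (idm T) (projT2 Y).

Lemma EbarR_fibre_id {T : Ob B} (Y : Fibre U T) (Z : Ob E) (g : Hom B T (fob U Z)) :
  EbarR Y Z g <-> Ebar U (projT1 Y) Z (comp g (fibre_id Y)).
Proof.
  destruct Y as [Y e]; subst T; unfold EbarR, fibre_id; simpl.
  rewrite comp_id_r; tauto.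
Qed.

Lemma EbarL_fibre_id {T : Ob B} (Y : Fibre U T) : EbarL (projT1 Y) Y (fibre_id Y).
Proof.
  destruct Y as [Y e]; subst T; unfold EbarL, fibre_id; simpl.
  exists (idm Y); apply fhom_id.
Qed.

Lemma Ebar_comp (X Y Z : Ob E) (f : Hom B (fob U X) (fob U Y))
    (g : Hom B (fob U Y) (fob U Z)) :
  Ebar U X Y f -> Ebar U Y Z g -> Ebar U X Z (comp g f).
Proof.
  intros [f' <-] [g' <-]. exists (comp g' f'). apply fhom_comp.
Qed.

Lemma EbarLR_comp {T : Ob B} {X : Ob E} {Y : Fibre U T} {Z : Ob E}
    {f : Hom B (fob U X) T} {g : Hom B T (fob U Z)} :
  EbarL X Y f -> EbarR Y Z g -> Ebar U X Z (comp g f).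
Proof.
  destruct Y as [Y e]; subst T; apply Ebar_comp.
Qed.

Lemma fibre_le_initial_lift {T : Ob B} (Z : Ob E) (g : Hom B T (fob U Z))
    (Yt : Fibre U T) :
  (forall W h, EbarL W Yt h <-> Ebar U W Z (comp g h)) ->
  forall Y, fibre_le Y Yt <-> EbarR Y Z g.
Proof.
  intros Hlift Y; rewrite EbarR_fibre_id, <- Hlift.
  destruct Y as [Y e]; subst T; unfold EbarL, fibre_le, fibre_id; simpl; tauto.
Qed.

Lemma EbarR_join {T : Ob B} {P : Fibre U T -> Prop} {J : Fibre U T} :
  fibred U -> is_join P J ->
  forall Z g, EbarR J Z g <-> (forall Y, P Y -> EbarR Y Z g).
Proof.
  intros Hfib HJ Z g.
  destruct (Hfib Z T g) as [Yt Hlift].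
  rewrite <- (fibre_le_initial_lift Z g Yt Hlift), (HJ Yt).
  split; intros H Y PY; apply (fibre_le_initial_lift Z g Yt Hlift); auto.
Qed.

Lemma forall_EbarR_conical {T : Ob B} {I : Type} (Yf : I -> Fibre U T)
    (Z : Ob E) (g : Hom B T (fob U Z)) :
  (forall i, EbarR (Yf i) Z g) <->
  (forall X f, (exists i, EbarL X (Yf i) f) -> Ebar U X Z (comp g f)).
Proof.
  split.
  - intros H X f [i Hf]; exact (EbarLR_comp Hf (H i)).
  - intros H i; apply EbarR_fibre_id, H.
    exists i; apply EbarL_fibre_id.
Qed.

End FibreCalculus.

Theorem proposition4p10 (E B : Cat) (U : Concrete E B) :
  fibred U -> order_complete U -> conically_cocomplete U.
Proof.
  intros Hfib Hoc T I Yf.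
  destruct (Hoc T (fun Y => exists i, Y = Yf i)) as [J HJ].
  exists J; intros Z g.
  rewrite (EbarR_join U Hfib HJ), <- forall_EbarR_conical.
  split.
  - intros H i; apply H; eauto.
  - intros H Y [i ->]; apply H.
Qed.
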